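(* Consider the four-player team game of dominoes described in the context. Over all possible deals and all possible legal games that end in a tranca, the largest number of points that the winning team can obtain is exactly $107$. That is, there exists a deal and a legal game ending in a tranca in which the winning team obtains $107$ points, and in every legal game ending in a tranca the winning team obtains at most $107$ points.
   Context: Domino tiles: the set of tiles consists of the 28 unordered pairs $[a,b]=[b,a]$ with $a,b\in\{0,1,\dots,6\}$; the number of points (pips) of $[a,b]$ is $a+b$. Four players, numbered 1 to 4, play; players 1 and 3 form one team and players 2 and 4 the other. The 28 tiles are dealt, 7 to each player (the initial hands). Players take turns in cyclic order $1,2,3,4,1,\dots$. The starting player places any one of their tiles on the table, forming a line of tiles (the board) with two open ends. On each subsequent turn, the player whose turn it is must, if they hold a tile containing a number equal to the number shown at one of the two open ends, place such a tile at that end (with equal numbers adjacent), the other number of the tile becoming the new open end; if they hold no such tile, they pass. A game ends either when a player places their last tile, or in a tranca (blocked game): a position in which no player holds a tile that can be placed. In a game ending in a tranca, the team whose two players' remaining tiles have the smaller total number of pips wins, and it obtains as points the total number of pips on the tiles remaining in the hands of the two players of the other (losing) team. *)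

From mathcomp Require Import all_boot.
Set Implicit Arguments. Unset Strict Implicit. Unset Printing Implicit Defensive.

(* A tile [a,b] = [b,a] with a,b in {0..6}, stored normalised with a <= b.
   This finType has exactly 28 elements. *)
Definition tile := {p : 'I_7 * 'I_7 | p.1 <= p.2}.
Definition tlo (t : tile) : 'I_7 := (val t).1.
Definition thi (t : tile) : 'I_7 := (val t).2.
Definition pips (t : tile) : nat := tlo t + thi t.

Definition has_num (t : tile) (v : 'I_7) : bool := (tlo t == v) || (thi t == v).
Definition other (t : tile) (v : 'I_7) : 'I_7 := if tlo t == v then thi t else tlo t.

(* Players 1,2,3,4 are represented by 0,1,2,3 : 'I_4.
   Teams: {1,3} = {0,2} (team false) and {2,4} = {1,3} (team true). *)
Definition team (p : 'I_4) : bool := odd p.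
Definition next (p : 'I_4) : 'I_4 := inord ((p.+1) %% 4).

(* A position: owner t = Some p if player p holds t, None if t is on the board;
   ends = the two open ends of the board (None if the board is empty);
   turn = player to move. *)
Record state := St {
  owner : {ffun tile -> option 'I_4};
  ends : option ('I_7 * 'I_7);
  turn : 'I_4 }.

Definition holds (s : state) (p : 'I_4) (t : tile) : bool := owner s t == Some p.

Definition placeable (s : state) (t : tile) : bool :=
  match ends s with
  | None => true
  | Some (l, r) => has_num t l || has_num t r
  end.

Definition can_play (s : state) (p : 'I_4) : bool :=
  [exists t, holds s p t && placeable s t].

Inductive move := Pass | Play of tile & bool. (* bool: true = left end, false = right end *)

Definition remove_tile (s : state) (t : tile) : {ffun tile -> option 'I_4} :=
  [ffun u => if u == t then None else owner s u].

Inductive step : state -> move -> state -> Prop :=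
| step_pass s :
    ~~ can_play s (turn s) ->
    step s Pass (St (owner s) (ends s) (next (turn s)))
| step_start s t side :
    ends s = None -> holds s (turn s) t ->
    step s (Play t side) (St (remove_tile s t) (Some (tlo t, thi t)) (next (turn s)))
| step_left s t l r :
    ends s = Some (l, r) -> holds s (turn s) t -> has_num t l ->
    step s (Play t true) (St (remove_tile s t) (Some (other t l, r)) (next (turn s)))
| step_right s t l r :
    ends s = Some (l, r) -> holds s (turn s) t -> has_num t r ->
    step s (Play t false) (St (remove_tile s t) (Some (l, other t r)) (next (turn s))).

Definition someone_out (s : state) : Prop := exists p : 'I_4, forall t, ~~ holds s p t.
Definition blocked (s : state) : Prop := forall p : 'I_4, ~~ can_play s p.
Definition game_over (s : state) : Prop := someone_out s \/ blocked s.

Inductive run : state -> seq move -> state -> Prop :=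
| run_nil s : run s [::] s
| run_cons s m s1 ms s2 :
    ~ game_over s -> step s m s1 -> run s1 ms s2 -> run s (m :: ms) s2.

Definition is_deal (d : {ffun tile -> 'I_4}) : Prop :=
  forall p : 'I_4, #|[set t | d t == p]| = 7.

Definition init (d : {ffun tile -> 'I_4}) : state :=
  St [ffun t => Some (d t)] None ord0.

Definition ends_in_tranca (s : state) : Prop := blocked s /\ ~ someone_out s.

Definition team_pips (s : state) (k : bool) : nat :=
  \sum_(t : tile | if owner s t is Some p then team p == k else false) pips t.

(* Points of the winning team in a tranca: the losing team's remaining pips.
   None if the totals are equal (no winning team). *)
Definition winner_points (s : state) : option nat :=
  let a := team_pips s false in
  let b := team_pips s true in
  if a < b then Some b else if b < a then Some a else None.

From Pilot Require Import Defs.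
From mathcomp Require Import all_boot zify.
Set Implicit Arguments. Unset Strict Implicit. Unset Printing Implicit Defensive.

(* In a tranca every number occurs an even number of times among the half-tiles on
   the board and the two open ends.  All seven tiles of an open number x are on the
   board, giving eight half-tiles x, so the other end shows x as well; and as [x,u]
   gives u a single half-tile, every other number u shows on a second board tile.

   Call u shared by a team if both partners still hold a u-tile at the end.  A partner
   facing a shared open end has to play, so a team keeping 14 tiles never let a tile
   touching a shared number reach the board, and a team keeping 13 tiles (it played
   once) let at most three.  As [x,u], [x,u'] and the second board tiles of u and u'
   would be four, a tile joining two shared numbers is a double or lies on the board, and
   a team keeping 14 tiles has no shared number.

   Colouring each number by which partners hold it confines the two hands to a few
   classes of tiles; for each of the 4^7 colourings a computation bounds the pips of 13
   such tiles (14 when no number is shared) by 107, while 12 tiles carry at most 106.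
   An explicit deal and a game of 17 turns attain 107. *)

(** * Tiles as pairs of numbers *)

Definition tile_pair (t : tile) : nat * nat := (tlo t : nat, thi t : nat).

Definition tile_pairs : seq (nat * nat) :=
  [seq (a, b) | a <- iota 0 7, b <- iota a (7 - a)].

Lemma tile_pair_inj : injective tile_pair.
Proof.
move=> [[a b] ?] [[c d] ?] [ac bd]; apply: val_inj => /=.
by congr pair; apply: val_inj.
Qed.

Lemma mem_tile_pairs (p : nat * nat) : (p \in tile_pairs) = (p.1 <= p.2 < 7).
Proof.
apply/allpairsPdep/idP => [[a [b [+ + ->]]] | ]; first by rewrite !mem_iota /=; lia.
by case: p => a b ab; exists a, b; split => //; rewrite mem_iota; move: ab => /=; lia.
Qed.

Lemma tile_pair_mem t : tile_pair t \in tile_pairs.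
Proof. by case: t => [[a b] /= ab]; rewrite mem_tile_pairs /= ab ltn_ord. Qed.

Lemma tile_pairP p : p \in tile_pairs -> {t | tile_pair t = p}.
Proof.
case: p => a b; rewrite mem_tile_pairs /= => /andP[ab b7].
have a7 : a < 7 by lia.
by exists (exist _ (Ordinal a7, Ordinal b7) ab).
Qed.

Lemma perm_tile_pairs : perm_eq [seq tile_pair t | t <- index_enum tile] tile_pairs.
Proof.
apply: uniq_perm; first by rewrite map_inj_uniq ?index_enum_uniq //; exact: tile_pair_inj.
  by vm_compute.
move=> p; apply/mapP/idP => [[t _ ->] | /tile_pairP[t <-]]; first exact: tile_pair_mem.
by exists t; rewrite ?mem_index_enum.
Qed.

Lemma sum_tiles (F : nat * nat -> nat) :
  \sum_(t : tile) F (tile_pair t) = sumn [seq F p | p <- tile_pairs].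
Proof.
by rewrite sumnE big_map -(perm_big _ perm_tile_pairs) big_map.
Qed.

Lemma has_num2_pair t (x u : 'I_7) : x != u -> has_num t x -> has_num t u ->
  tile_pair t = (minn x u, maxn x u).
Proof.
rewrite /has_num /tile_pair /tlo /thi -!val_eqE; case: t => [[a b] /= ab].
by move=> xu /orP[/eqP ?|/eqP ?] /orP[/eqP ?|/eqP ?]; congr pair; lia.
Qed.

Lemma has_num2_inj t t' (x u : 'I_7) : x != u ->
  has_num t x -> has_num t u -> has_num t' x -> has_num t' u -> t = t'.
Proof.
move=> xu tx tu t'x t'u; apply: tile_pair_inj.
by rewrite (has_num2_pair xu tx tu) (has_num2_pair xu t'x t'u).
Qed.

Lemma exists_has_num2 (x u : 'I_7) : exists t, has_num t x && has_num t u.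
Proof.
have /tile_pairP[t /= [tlo_t thi_t]] : (minn x u, maxn x u) \in tile_pairs.
  by rewrite mem_tile_pairs /=; have := ltn_ord x; have := ltn_ord u; lia.
by exists t; rewrite /has_num -!val_eqE /= tlo_t thi_t; apply/andP; split; apply/orP; lia.
Qed.

Lemma has_num_lo t : has_num t (tlo t).
Proof. by rewrite /has_num eqxx. Qed.

Lemma has_num_hi t : has_num t (thi t).
Proof. by rewrite /has_num eqxx orbT. Qed.

Lemma has_num_3 t (a b c : 'I_7) :
  has_num t a -> has_num t b -> has_num t c -> a != b -> a != c -> b = c.
Proof.
by rewrite /has_num => /orP[]/eqP<- /orP[]/eqP<- /orP[]/eqP<-; rewrite ?eqxx.
Qed.

Definition num_count (t : tile) (v : 'I_7) : nat := (tlo t == v) + (thi t == v).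

Lemma sum_num_count v : \sum_(t : tile) num_count t v = 8.
Proof.
rewrite (sum_tiles (fun p => (p.1 == v) + (p.2 == v))).
by case: v => [[|[|[|[|[|[|[|v]]]]]]] ?].
Qed.

Lemma team_next p : team (Defs.next p) = ~~ team p.
Proof.
rewrite /team /Defs.next inordK; last by rewrite ltnS -ltnS ltn_pmod.
by case: p => [[|[|[|[|p]]]] ?].
Qed.

Lemma remove_tileE s t u : remove_tile s t u = if u == t then None else owner s u.
Proof. by rewrite ffunE. Qed.

Lemma step_turn s m s1 : step s m s1 -> turn s1 = Defs.next (turn s).
Proof. by case. Qed.

Lemma step_owner_back s m s1 t q : step s m s1 -> owner s1 t = Some q -> owner s t = Some q.
Proof.
by case=> [//|s' t0 ? ? ?|s' t0 ? ? ? ? ?|s' t0 ? ? ? ? ?]; rewrite /= remove_tileE; case: ifP.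
Qed.

Lemma run_owner_back s ms s1 t q : run s ms s1 -> owner s1 t = Some q -> owner s t = Some q.
Proof. by elim=> // s0 m s' ms' s2 _ /step_owner_back + _ IH /IH; apply. Qed.

(** * Parity of the board in a tranca *)

Definition board_sum (s : state) (F : tile -> nat) : nat := \sum_(t | owner s t == None) F t.

Definition end_count (s : state) (v : 'I_7) : nat :=
  if ends s is Some (l, r) then (l == v) + (r == v) else 0.

Definition even_halves (s : state) : Prop :=
  forall v, ~~ odd (board_sum s (num_count^~ v) + end_count s v).

Lemma board_sum_remove s t q F e p : owner s t = Some q ->
  board_sum (St (remove_tile s t) e p) F = F t + board_sum s F.
Proof.
move=> st; rewrite /board_sum (bigD1 t) /= ?remove_tileE ?eqxx //; congr (_ + _).
by apply: eq_bigl => u; rewrite remove_tileE; case: (u =P t) => [->|_] /=; rewrite ?st ?andbT.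
Qed.

Lemma num_count_other t l v : has_num t l -> num_count t v = (l == v) + (other t l == v).
Proof.
by rewrite /has_num /num_count /other; case: eqP => [-> | _] //= /eqP ->; rewrite addnC.
Qed.

Lemma step_even_halves s m s1 : step s m s1 -> even_halves s -> even_halves s1.
Proof.
have even_shift n k n' : n' = n + k * 2 -> ~~ odd n -> ~~ odd n'.
  by move=> ->; rewrite oddD oddM andbF addbF.
case=> [s' _ | s' t _ s_t0 /eqP s_t | s' t l r s_lr /eqP s_t t_l | s' t l r s_lr /eqP s_t t_r]
  even_s v; move: (even_s v); rewrite /end_count /= ?s_t0 ?s_lr //.
- rewrite (board_sum_remove _ _ _ s_t) /num_count.
  by apply: (even_shift _ ((tlo t == v) + (thi t == v))); lia.
- rewrite (board_sum_remove _ _ _ s_t) (num_count_other v t_l).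
  by apply: (even_shift _ (other t l == v)); lia.
- rewrite (board_sum_remove _ _ _ s_t) (num_count_other v t_r).
  by apply: (even_shift _ (other t r == v)); lia.
Qed.

Lemma run_even_halves s ms s1 : run s ms s1 -> even_halves s -> even_halves s1.
Proof. by elim=> // s0 m s' ms' s2 _ s0_s' _ IH even_s0; apply/IH/(step_even_halves s0_s'). Qed.

Lemma even_halves_init d : even_halves (init d).
Proof. by move=> v; rewrite /board_sum /end_count /= big_pred0 // => t; rewrite ffunE. Qed.

Lemma blocked_placeable s t : blocked s -> placeable s t -> owner s t = None.
Proof.
move=> blocked_s s_t; case s_o: (owner s t) => [q|] //.
by case/negP: (blocked_s q); apply/existsP; exists t; rewrite /holds s_o eqxx.
Qed.

Lemma num_count0 t v : ~~ has_num t v -> num_count t v = 0.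
Proof. by rewrite /has_num /num_count negb_or => /andP[/negbTE-> /negbTE->]. Qed.

Lemma board_sum_full s v : (forall t, has_num t v -> owner s t = None) ->
  board_sum s (num_count^~ v) = 8.
Proof.
move=> board_v; rewrite -(sum_num_count v) /board_sum big_mkcond /=.
apply: eq_bigr => t _; case: (boolP (has_num t v)) => [/board_v -> // | /num_count0 ->].
by case: ifP.
Qed.

Lemma num_count_has2 t (x u : 'I_7) : x != u -> has_num t x -> has_num t u -> num_count t u = 1.
Proof.
move=> xu t_x t_u; have := has_num2_pair xu t_x t_u; move: xu.
by rewrite /num_count /tile_pair -!val_eqE /= => xu [-> ->]; lia.
Qed.

Lemma tranca_shape f : even_halves f -> ends_in_tranca f ->
  exists2 x : 'I_7, forall t, has_num t x -> owner f t = None &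
    forall u, u != x -> exists t, [/\ owner f t = None, has_num t u & ~~ has_num t x].
Proof.
move=> even_f [blocked_f not_out].
case f_lr: (ends f) => [[l r]|]; last first.
  case: not_out; exists ord0 => t; apply/negP => /eqP f_t.
  by move: (@blocked_placeable _ t blocked_f); rewrite /placeable f_lr f_t => /(_ isT).
have board_l t : has_num t l -> owner f t = None.
  by move=> t_l; apply: blocked_placeable blocked_f _; rewrite /placeable f_lr t_l.
have r_l : r = l.
  by apply/eqP; move: (even_f l); rewrite /end_count f_lr board_sum_full // eqxx; case: eqP.
subst r.
exists l => // u; rewrite eq_sym => lu.
suff /existsP[t /and3P[/eqP ? ? ?]] :
  [exists t, [&& owner f t == None, has_num t u & ~~ has_num t l]] by exists t.
apply: contraT => /existsPn no_t.
have [e /andP[e_l e_u]] := exists_has_num2 l u.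
suff : board_sum f (num_count^~ u) = 1.
  by move: (even_f u); rewrite /end_count f_lr (negbTE lu) addn0 => /[swap] ->.
rewrite /board_sum (bigD1 e) /= ?board_l ?eqxx // (num_count_has2 lu e_l e_u).
rewrite big1 // => t /andP[/eqP f_t t_e]; apply: num_count0; apply: contra t_e => t_u.
move: (no_t t); rewrite f_t eqxx t_u /= negbK => t_l.
by rewrite (has_num2_inj lu t_l t_u e_l e_u).
Qed.

(** * Teams and shared numbers *)

Definition team_hand (s : state) (K : bool) : {set tile} :=
  [set t | if owner s t is Some p then team p == K else false].

Lemma card_team_hand_remove s s1 t q K :
  owner s1 = remove_tile s t -> owner s t = Some q ->
  #|team_hand s K| = #|team_hand s1 K| + (team q == K).
Proof.
move=> s1_rem s_t; rewrite (cardsD1 t) inE s_t addnC; congr (_ + _).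
by apply: eq_card => u; rewrite !inE s1_rem remove_tileE; case: (u =P t) => [->|].
Qed.

Definition first_member (K : bool) : 'I_4 := inord K.
Definition second_member (K : bool) : 'I_4 := inord (K + 2).

Lemma team_members K q : (team q == K) = (q == first_member K) || (q == second_member K).
Proof.
by rewrite -!val_eqE /= !inordK /team; case: K => //; case: q => [[|[|[|[|?]]]] ?].
Qed.

Lemma first_second_member K : first_member K != second_member K.
Proof. by rewrite -val_eqE /= !inordK; case: K. Qed.

Definition hand (s : state) (q : 'I_4) : {set tile} := [set t | owner s t == Some q].

Lemma team_handE s K : team_hand s K = hand s (first_member K) :|: hand s (second_member K).
Proof. by apply/setP => t; rewrite !inE; case: (owner s t) => //= q; rewrite team_members. Qed.

Lemma disjoint_hands s K : [disjoint hand s (first_member K) & hand s (second_member K)].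
Proof.
rewrite -setI_eq0; apply/eqP/setP => t; rewrite !inE.
case: (owner s t) => //= q; apply/negP => /andP[/eqP[->] /eqP[/eqP]].
by rewrite (negPf (first_second_member K)).
Qed.

Lemma card_team_hand s K :
  #|team_hand s K| = #|hand s (first_member K)| + #|hand s (second_member K)|.
Proof. by rewrite team_handE cardsU (disjoint_setI0 (disjoint_hands _ _)) cards0 subn0. Qed.

Lemma team_pipsE s K : team_pips s K = \sum_(t in team_hand s K) pips t.
Proof. by apply: eq_bigl => t; rewrite inE. Qed.

Definition holds_num (s : state) (q : 'I_4) (u : 'I_7) : bool :=
  [exists t, holds s q t && has_num t u].

Section SharedNumbers.

Variables (f : state) (K : bool).

Definition shared (u : 'I_7) : bool := [forall q : 'I_4, (team q == K) ==> holds_num f q u].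

Definition touches_shared (t : tile) : bool := shared (tlo t) || shared (thi t).

Definition shared_end (s : state) : bool :=
  if ends s is Some (l, r) then shared l || shared r else false.

Definition shared_board (s : state) : nat :=
  #|[set t | (owner s t == None) && touches_shared t]|.

Lemma shared_board_remove s s1 t q :
  owner s1 = remove_tile s t -> owner s t = Some q ->
  shared_board s1 = touches_shared t + shared_board s.
Proof.
move=> s1_rem s_t; rewrite /shared_board (cardsD1 t) inE s1_rem remove_tileE eqxx /=.
congr (_ + _); apply: eq_card => u.
by rewrite !inE remove_tileE; case: (u =P t) => [->|]; rewrite ?s_t.
Qed.

Lemma touches_sharedP t u : has_num t u -> shared u -> touches_shared t.
Proof. by rewrite /touches_shared => /orP[] /eqP-> ->; rewrite ?orbT. Qed.

Lemma shared_end_can_play s q : (forall t p, owner f t = Some p -> owner s t = Some p) ->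
  shared_end s -> team q == K -> can_play s q.
Proof.
move=> f_s; rewrite /shared_end /can_play /placeable; case: (ends s) => [[l r]|] //.
by move=> /orP[] /forallP/(_ q) /implyP/[apply] /existsP[t /andP[/eqP/f_s s_t t_v]];
  apply/existsP; exists t; rewrite /holds s_t eqxx t_v ?orbT.
Qed.

Lemma touches_shared_other t l :
  has_num t l -> ~~ shared l -> touches_shared t = shared (other t l).
Proof.
rewrite /has_num /touches_shared /other; case: (tlo t =P l) => [-> _ /negbTE-> // | _ /= /eqP->].
by move=> /negbTE->; rewrite orbF.
Qed.

Lemma step_cases s m s1 : step s m s1 ->
  [/\ owner s1 = owner s, ends s1 = ends s & ~~ can_play s (turn s)] \/
  exists2 t, owner s t = Some (turn s) &
    owner s1 = remove_tile s t /\ (~~ shared_end s -> shared_end s1 = touches_shared t).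
Proof.
case=> [s' | s' t side | s' t l r | s' t l r] => [? | _ /eqP ? | s_lr /eqP ? t_v | s_lr /eqP ? t_v];
  [by left | right; exists t => // ..]; split => //; rewrite /shared_end /= s_lr negb_or.
- by case/andP=> /(touches_shared_other t_v)-> /negbTE->; rewrite orbF.
- by case/andP=> /negbTE-> /(touches_shared_other t_v)->.
Qed.

Hypothesis blocked_f : blocked f.

Lemma shared_end_final : ~~ shared_end f.
Proof.
apply/negP => f_sh; case/negP: (blocked_f (first_member K)).
by apply: (shared_end_can_play (fun _ _ => id) f_sh); rewrite team_members eqxx.
Qed.

(* For [s] on the way to the final position [f]: if the team plays no more tile after
   [s], a shared open end at [s] faces an opponent, and at most one more tile touching a
   shared number reaches the board (none if no shared end is open at [s]); if the team
   plays exactly one more tile, at most 2, 3 or 4 more do. *)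
Definition shared_invariant (s : state) : Prop :=
  [/\ #|team_hand f K| <= #|team_hand s K|,
      #|team_hand s K| = #|team_hand f K| ->
        (shared_end s -> team (turn s) != K) /\ shared_board f <= shared_board s + shared_end s &
      #|team_hand s K| = #|team_hand f K|.+1 ->
        shared_board f <= shared_board s +
                          (if shared_end s then (if team (turn s) == K then 2 else 4) else 3)].

Lemma shared_invariant_final : shared_invariant f.
Proof. by split=> [|_|]; rewrite ?(negbTE shared_end_final) ?addn0 //; lia. Qed.

Lemma pass_shared_invariant s s1 :
  (forall t p, owner f t = Some p -> owner s t = Some p) ->
  owner s1 = owner s -> ends s1 = ends s -> ~~ can_play s (turn s) ->
  team (turn s1) = ~~ team (turn s) -> shared_invariant s1 -> shared_invariant s.
Proof.
move=> f_s own1 ends1 no_play turn1 [le_hand1 hand1_eq hand1_succ].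
have [hand1 board1 shend1] : [/\ team_hand s1 K = team_hand s K,
    shared_board s1 = shared_board s & shared_end s1 = shared_end s].
  by rewrite /team_hand /shared_board /shared_end own1 ends1.
have turn_notK : shared_end s -> team (turn s) != K.
  by move=> sh; apply: contra no_play; exact: shared_end_can_play.
rewrite hand1 board1 shend1 turn1 in le_hand1 hand1_eq hand1_succ.
split=> // [/hand1_eq[] // | /hand1_succ].
by case: (shared_end s) turn_notK => [/(_ isT)/negbTE-> | //]; case: ifP => _; lia.
Qed.

Lemma play_shared_invariant s s1 t :
  owner s t = Some (turn s) -> owner s1 = remove_tile s t ->
  (~~ shared_end s -> shared_end s1 = touches_shared t) ->
  team (turn s1) = ~~ team (turn s) -> shared_invariant s1 -> shared_invariant s.
Proof.
move=> s_t own1 end1 turn1 [le_hand1 hand1_eq hand1_succ].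
have hand_s := card_team_hand_remove K own1 s_t.
have board1 := shared_board_remove own1 s_t.
have touch1 : touches_shared t <= 1 by case: touches_shared.
case turnK: (team (turn s) == K); rewrite turnK in hand_s.
  split=> [|?|]; [lia | lia | rewrite hand_s addn1 => /succn_inj/hand1_eq[_]].
  rewrite board1 turnK; case: (shared_end s) end1 => [_ | /(_ isT)->]; case: (shared_end s1); lia.
have turn1K : team (turn s1) == K by rewrite turn1; case: (team _) K turnK => [] [].
rewrite addn0 in hand_s; rewrite turn1K -hand_s in hand1_eq hand1_succ; rewrite -hand_s in le_hand1.
split=> [|/hand1_eq[no_end1 board_le] | /hand1_succ]; rewrite ?turnK //.
  split=> //; move: board_le; rewrite board1 (contraTF no_end1 isT).
  by case: (shared_end s) end1 => [_ | /(_ isT) <-]; lia.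
rewrite board1; case: (shared_end s) end1 => [_ | /(_ isT)->];
  by case: (touches_shared t); case: (shared_end s1); lia.
Qed.

Lemma step_shared_invariant s m s1 :
  (forall t p, owner f t = Some p -> owner s t = Some p) ->
  step s m s1 -> shared_invariant s1 -> shared_invariant s.
Proof.
move=> f_s s_s1; have turn1 : team (turn s1) = ~~ team (turn s).
  by rewrite (step_turn s_s1) team_next.
case: (step_cases s_s1) => [[own1 ends1 no_play] | [t s_t [own1 end1]]].
  exact: pass_shared_invariant.
exact: play_shared_invariant s_t own1 end1 turn1.
Qed.

Lemma run_shared_invariant s ms : run s ms f -> shared_invariant s.
Proof.
move def_f: f => f' run_s.
elim: run_s def_f => [? <- | s0 m s1 ms' s2 not_over s0_s1 run_s1 IH def_f].
  exact: shared_invariant_final.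
apply: (step_shared_invariant _ s0_s1 (IH def_f)) => t p f_t.
by apply: run_owner_back (run_cons not_over s0_s1 run_s1) _; rewrite -def_f.
Qed.

End SharedNumbers.

Lemma sharedE f K u :
  shared f K u = holds_num f (first_member K) u && holds_num f (second_member K) u.
Proof.
apply/forallP/andP => [all_q | [first_u second_u] q].
  by split; apply: implyP (all_q _) _; rewrite team_members eqxx ?orbT.
by rewrite team_members; apply/implyP => /orP[] /eqP->.
Qed.

(** * Pip bounds by colouring the numbers *)

Lemma sum_le_threshold (T : finType) (A B : {pred T}) (w : T -> nat) th :
  {subset A <= B} -> \sum_(t in A) w t <= #|A| * th + \sum_(t in B) (w t - th).
Proof.
move=> AB; rewrite -sum_nat_const.
apply: (@leq_trans (\sum_(t in A) (th + (w t - th)))); first by apply: leq_sum => t _; lia.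
rewrite big_split leq_add2l /= [X in X <= _]big_mkcond [X in _ <= X]big_mkcond.
by apply: leq_sum => t _; case: ifP => // /AB ->.
Qed.

Definition excess (L : seq nat) (th : nat) : nat := sumn [seq x - th | x <- L].

(* The sum of the [n] largest entries of [L], for [n <= size L]. *)
Definition top_sum (L : seq nat) (n : nat) : nat :=
  let th := nth 0 (sort geq L) n.-1 in n * th + excess L th.

Definition class_pips (P : pred (nat * nat)) : seq nat := [seq p.1 + p.2 | p <- tile_pairs & P p].

(* Colours of numbers: 0 for the blocking number, 1 and 2 for numbers held by only one
   partner (or by neither), 3 for shared numbers.  A tile held by partner [i] has both
   numbers of colour [i] or 3, and is a double if both numbers are shared. *)
Definition side_class (c : nat -> nat) (i : nat) (p : nat * nat) : bool :=
  [&& (c p.1 == i) || (c p.1 == 3), (c p.2 == i) || (c p.2 == 3) & (c p.1 != 3) || (c p.2 != 3)].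

Definition shared_double (c : nat -> nat) (p : nat * nat) : bool :=
  [&& c p.1 == 3, c p.2 == 3 & p.1 == p.2].

(* Under [vm_compute] the table is built once per list [L]. *)
Definition top_table (L : seq nat) : nat -> nat :=
  let tbl := [seq top_sum L n | n <- iota 0 8] in nth 0 tbl.

Lemma top_tableE L n : n <= 7 -> top_table L n = top_sum L n.
Proof. by move=> n7; rewrite /top_table (nth_map 0) ?size_iota ?nth_iota //; lia. Qed.

(* [na] and [nb] count the tiles of the two partners outside the shared doubles; the
   team keeps 13 tiles, or 14 when no number is shared. *)
Definition top_sums_ok (l : seq nat) : bool :=
  let c := nth 0 l in
  let N := 13 + (3 \notin l) in
  let topA := top_table (class_pips (side_class c 1)) in
  let topB := top_table (class_pips (side_class c 2)) in
  let LS := class_pips (shared_double c) in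
  all (fun na => all (fun nb => (na + nb <= N) ==>
    (topA na + topB nb + top_sum LS (N - na - nb) <= 107)) (iota 0 8)) (iota 0 8).

(* An [if] rather than [==>], so that [vm_compute] skips the other colourings. *)
Definition colouring_ok (l : seq nat) : bool :=
  if count_mem 0 l == 1 then top_sums_ok l else true.

Lemma colouring_okP l na nb : colouring_ok l -> count_mem 0 l = 1 -> na <= 7 -> nb <= 7 ->
  na + nb <= 13 + (3 \notin l) ->
  top_table (class_pips (side_class (nth 0 l) 1)) na +
  top_table (class_pips (side_class (nth 0 l) 2)) nb +
  top_sum (class_pips (shared_double (nth 0 l))) (13 + (3 \notin l) - na - nb) <= 107.
Proof.
move=> + l0 na7 nb7 nab; rewrite /colouring_ok l0 eqxx /top_sums_ok.
have in_iota n : n <= 7 -> n \in iota 0 8 by rewrite mem_iota; lia.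
by move=> /allP/(_ na (in_iota _ na7))/allP/(_ nb (in_iota _ nb7))/implyP/(_ nab).
Qed.

Fixpoint colourings (n : nat) : seq (seq nat) :=
  if n is n'.+1 then [seq i :: l | i <- iota 0 4, l <- colourings n'] else [:: [::]].

Lemma all_colourings_ok : all colouring_ok (colourings 7).
Proof. by vm_compute. Qed.

Lemma mem_colourings l : all (fun i => i < 4) l -> l \in colourings (size l).
Proof.
elim: l => [|i l IH] // /andP[i4 /IH l_in].
change (i :: l \in [seq j :: l' | j <- iota 0 4, l' <- colourings (size l)]).
by apply/allpairsPdep; exists i, l; rewrite mem_iota.
Qed.

Lemma sumn_map_if (T : Type) (s : seq T) (P : pred T) (F : T -> nat) :
  sumn [seq (if P p then F p else 0) | p <- s] = sumn [seq F p | p <- s & P p].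
Proof. by elim: s => //= p s IH; case: (P p); rewrite /= IH. Qed.

Lemma sum_class_pips_le (H : {pred tile}) (P : pred (nat * nat)) m th :
  #|[pred t in H | P (tile_pair t)]| <= m ->
  \sum_(t in H | P (tile_pair t)) pips t <= m * th + excess (class_pips P) th.
Proof.
move=> card_m.
have -> : excess (class_pips P) th = \sum_(t | P (tile_pair t)) (pips t - th).
  rewrite big_mkcond (sum_tiles (fun p => if P p then p.1 + p.2 - th else 0)) sumn_map_if.
  by rewrite /excess /class_pips -map_comp.
have sub : {subset [pred t in H | P (tile_pair t)] <= [pred t | P (tile_pair t)]}.
  by move=> t /andP[].
apply: leq_trans (sum_le_threshold pips th sub) _.
by rewrite leq_add2r leq_mul2r card_m orbT.
Qed.

Lemma small_hand_pips (H : {set tile}) : #|H| <= 12 -> \sum_(t in H) pips t <= 106.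
Proof.
move=> H12; apply: leq_trans (sum_le_threshold (B := predT) pips 7 _) _ => //.
have -> : \sum_(t in predT) (pips t - 7) = 22.
  by rewrite (eq_bigl xpredT) // (sum_tiles (fun p => p.1 + p.2 - 7)).
by apply: leq_trans (leq_add (leq_mul H12 (leqnn 7)) (leqnn 22)) _.
Qed.

Definition hand_tile (c : 'I_7 -> nat) (i : nat) (t : tile) : bool :=
  [&& (c (tlo t) == i) || (c (tlo t) == 3), (c (thi t) == i) || (c (thi t) == 3) &
      (c (tlo t) == 3) && (c (thi t) == 3) ==> (tlo t == thi t)].

Definition colour_seq (c : 'I_7 -> nat) : seq nat := [seq c (inord n) | n <- iota 0 7].

Lemma nth_colour_seq c (v : 'I_7) : nth 0 (colour_seq c) v = c v.
Proof. by rewrite (nth_map 0) ?size_iota // nth_iota // add0n inord_val. Qed.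

Lemma hand_tile_classes c i t : hand_tile c i t =
  side_class (nth 0 (colour_seq c)) i (tile_pair t) ||
  shared_double (nth 0 (colour_seq c)) (tile_pair t).
Proof.
rewrite /hand_tile /side_class /shared_double /= !nth_colour_seq val_eqE.
by case: (c (tlo t) == 3); case: (c (thi t) == 3); case: (c (tlo t) == i); case: (c (thi t) == i);
  rewrite /= ?andbF ?orbF.
Qed.

Section TwoHands.

Variables (c : 'I_7 -> nat) (x : 'I_7) (HA HB : {set tile}).
Hypotheses (c_lt4 : forall v, c v < 4) (c_eq0 : forall v, (c v == 0) = (v == x)).
Hypotheses (HA_tiles : {in HA, forall t, hand_tile c 1 t})
           (HB_tiles : {in HB, forall t, hand_tile c 2 t}).
Hypotheses (HAB : [disjoint HA & HB]) (HA7 : #|HA| <= 7) (HB7 : #|HB| <= 7).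

Let l := colour_seq c.
Let cn := nth 0 l.

Lemma colour_seq_ok : colouring_ok l.
Proof.
apply: (allP all_colourings_ok); rewrite -[7](size_map (c \o inord) (iota 0 7)).
by apply: mem_colourings; apply/allP => _ /mapP[n _ ->].
Qed.

Lemma count_colour0 : count_mem 0 l = 1.
Proof.
rewrite count_map (@eq_in_count _ _ (pred1 (x : nat))).
  by rewrite count_uniq_mem ?iota_uniq // mem_iota ltn_ord.
by move=> n; rewrite mem_iota add0n /= => n7; rewrite c_eq0 -val_eqE /= inordK.
Qed.

Lemma colour3_free : (3 \notin l) = [forall v, c v != 3].
Proof.
apply/idP/forallP => [no3 v | all_v].
  by apply: contraNneq no3 => <-; apply/mapP; exists (nat_of_ord v);
    rewrite ?inord_val // mem_iota ltn_ord.
by apply/mapP => -[n _ /eqP]; rewrite eq_sym (negbTE (all_v _)).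
Qed.

Let A := side_class cn 1.
Let B := side_class cn 2.
Let S := shared_double cn.
Let H := HA :|: HB.

Lemma classes_disjoint p : [&& A p ==> ~~ B p, A p ==> ~~ S p & B p ==> ~~ S p].
Proof.
by rewrite /A /B /S /side_class /shared_double; case: (cn p.1) => [|[|[|[|?]]]];
  case: (cn p.2) => [|[|[|[|?]]]]; rewrite /= ?andbF.
Qed.

Lemma HA_classes t : t \in HA -> A (tile_pair t) || S (tile_pair t).
Proof. by move/HA_tiles; rewrite hand_tile_classes. Qed.

Lemma HB_classes t : t \in HB -> B (tile_pair t) || S (tile_pair t).
Proof. by move/HB_tiles; rewrite hand_tile_classes. Qed.

Lemma split_classes (F : tile -> nat) :
  \sum_(t in H) F t = \sum_(t in H | A (tile_pair t)) F t + \sum_(t in H | B (tile_pair t)) F t +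
                       \sum_(t in H | S (tile_pair t)) F t.
Proof.
have classes t : t \in H -> [|| A (tile_pair t), B (tile_pair t) | S (tile_pair t)].
  by rewrite inE => /orP[/HA_classes | /HB_classes] /orP[]->; rewrite ?orbT.
rewrite (bigID (fun t => A (tile_pair t))) -addnA /=; congr (_ + _).
rewrite (bigID (fun t => B (tile_pair t))) /=; congr (_ + _); apply: eq_bigl => t;
  move: (classes t) (classes_disjoint (tile_pair t)).
all: by case: (t \in H); case: (A _); case: (B _); case: (S _) => //= /(_ isT).
Qed.

Lemma card_class_le (K : {set tile}) (P : pred (nat * nat)) :
  {in H, forall t, P (tile_pair t) -> t \in K} -> #|[pred t in H | P (tile_pair t)]| <= #|K|.
Proof. by move=> HK; apply/subset_leq_card/subsetP => t /andP[/HK]; apply. Qed.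

Lemma two_hands_pips : #|HA| + #|HB| <= 13 + [forall v, c v != 3] -> \sum_(t in H) pips t <= 107.
Proof.
rewrite -colour3_free => card_H.
set nA := #|[pred t in H | A (tile_pair t)]|; set nB := #|[pred t in H | B (tile_pair t)]|.
set nS := #|[pred t in H | S (tile_pair t)]|.
have nA7 : nA <= 7.
  apply: leq_trans HA7; apply: card_class_le => t; rewrite inE => /orP[// | /HB_classes + At].
  by move: (classes_disjoint (tile_pair t)); rewrite At; case: (B _); case: (S _).
have nB7 : nB <= 7.
  apply: leq_trans HB7; apply: card_class_le => t; rewrite inE => /orP[/HA_classes + Bt | //].
  by move: (classes_disjoint (tile_pair t)); rewrite Bt; case: (A _); case: (S _).
have card_split : nA + nB + nS = #|HA| + #|HB|.
  rewrite -cardsUI (disjoint_setI0 HAB) cards0 addn0 -sum1_card split_classes.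
  by rewrite /nA /nB /nS -!sum1_card.
have nAB : nA + nB <= 13 + (3 \notin l).
  by rewrite -card_split in card_H; apply: leq_trans card_H; rewrite leq_addr.
apply: leq_trans (colouring_okP colour_seq_ok count_colour0 nA7 nB7 nAB).
rewrite split_classes; apply: leq_add; first apply: leq_add.
- by rewrite top_tableE // /top_sum; apply: sum_class_pips_le.
- by rewrite top_tableE // /top_sum; apply: sum_class_pips_le.
- by rewrite /top_sum; apply: sum_class_pips_le; rewrite -subnDA leq_subRL // card_split.
Qed.

End TwoHands.

(** * The bound on the points in a tranca *)

Lemma card_hand_run d ms f q : is_deal d -> run (init d) ms f -> #|hand f q| <= 7.
Proof.
move=> deal_d run_f; apply: leq_trans (_ : _ <= #|[set t | d t == q]|) _; last by rewrite deal_d.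
apply/subset_leq_card/subsetP => t.
by rewrite !inE => /eqP/(run_owner_back run_f); rewrite ffunE => -[->].
Qed.

Lemma card_team_hand_init d K : is_deal d -> #|team_hand (init d) K| <= 14.
Proof.
move=> deal_d; rewrite team_handE; apply: leq_trans (leq_card_setU _ _) _.
have hand_init q : hand (init d) q = [set t | d t == q].
  by apply/setP => t; rewrite !inE ffunE.
by rewrite !hand_init !deal_d.
Qed.

Section Tranca.

Variables (d : {ffun tile -> 'I_4}) (ms : seq move) (f : state) (K : bool) (x : 'I_7).
Hypotheses (deal_d : is_deal d) (run_f : run (init d) ms f) (blocked_f : blocked f).
Hypothesis board_x : forall t, has_num t x -> owner f t = None.
Hypothesis board_u :
  forall u, u != x -> exists t, [/\ owner f t = None, has_num t u & ~~ has_num t x].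

Let HA := hand f (first_member K).
Let HB := hand f (second_member K).

Lemma shared_board_tranca : 13 <= #|HA| + #|HB| ->
  shared_board f K f <= 3 /\ (#|HA| + #|HB| = 14 -> shared_board f K f = 0).
Proof.
rewrite -card_team_hand => big; have le14 := card_team_hand_init K deal_d.
have [le_hand hand_eq hand_succ] := run_shared_invariant K blocked_f run_f.
have board0 : shared_board f K (init d) = 0.
  by apply/eqP; rewrite cards_eq0; apply/eqP/setP => t; rewrite !inE ffunE.
rewrite /= board0 in hand_eq hand_succ.
set ni := #|team_hand (init d) K| in le14 le_hand hand_eq hand_succ *.
set nf := #|team_hand f K| in big le_hand hand_eq hand_succ *.
have [/hand_eq[_] | ni_nf] : ni = nf \/ ni = nf.+1 by lia.
  by rewrite leqn0 => /eqP->.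
by have := hand_succ ni_nf; split=> // nf14; lia.
Qed.

Lemma shared_neq_x u : shared f K u -> u != x.
Proof.
rewrite sharedE => /andP[/existsP[t /andP[/eqP f_t t_u]] _]; apply: contraTneq t_u => ->.
by apply/negP => /board_x; rewrite f_t.
Qed.

Lemma no_shared_full : #|HA| + #|HB| = 14 -> forall u, ~~ shared f K u.
Proof.
move=> full u; apply/negP => sh_u; have [e /andP[e_x e_u]] := exists_has_num2 x u.
have [_ /(_ full)/eqP] := shared_board_tranca (ltnW (eq_leq (esym full))).
by rewrite cards_eq0 => /eqP/setP/(_ e); rewrite !inE board_x // (touches_sharedP e_u sh_u).
Qed.

Lemma shared_pair_board u1 u2 t : 13 <= #|HA| + #|HB| ->
  shared f K u1 -> shared f K u2 -> u1 != u2 -> has_num t u1 -> has_num t u2 -> owner f t = None.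
Proof.
move=> big sh1 sh2 u12 t_u1 t_u2.
have [x1 x2] := (shared_neq_x sh1, shared_neq_x sh2).
have [t1 [f_t1 t1_u1 t1_x]] := board_u x1.
have [t2 [f_t2 t2_u2 t2_x]] := board_u x2.
have [t12 | t12] := eqVneq t1 t2.
  by subst t2; rewrite -(has_num2_inj u12 t1_u1 t2_u2 t_u1 t_u2).
have [e1 /andP[e1_x e1_u1]] := exists_has_num2 x u1.
have [e2 /andP[e2_x e2_u2]] := exists_has_num2 x u2.
have e12 : e1 != e2.
  by apply: contra_neq u12 => e12; apply: (has_num_3 e1_x e1_u1); rewrite ?e12 // eq_sym.
have ne_x e t' : has_num e x -> ~~ has_num t' x -> e != t' by move=> ex; apply: contraNneq => <-.
have board_touch y u : owner f y = None -> has_num y u -> shared f K u ->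
    (owner f y == None) && touches_shared f K y.
  by move=> f_y y_u sh_u; rewrite f_y (touches_sharedP y_u sh_u).
have board3 := proj1 (shared_board_tranca big); rewrite /shared_board in board3.
have : #|e1 |: (e2 |: (t1 |: [set t2]))| <= 3.
  apply: (leq_trans _ board3); apply/subset_leq_card/subsetP => y; rewrite !inE => /or4P[] /eqP->.
  - by apply: (board_touch _ u1); rewrite ?board_x.
  - by apply: (board_touch _ u2); rewrite ?board_x.
  - exact: (board_touch _ u1).
  - exact: (board_touch _ u2).
by rewrite !cardsU1 cards1 !inE !negb_or e12 t12 !ne_x.
Qed.

Definition num_colour (v : 'I_7) : nat :=
  if v == x then 0 else if shared f K v then 3
  else if holds_num f (second_member K) v then 2 else 1.

Lemma hand_num q t u : owner f t = Some q -> has_num t u -> (u != x) && holds_num f q u.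
Proof.
move=> f_t t_u; apply/andP; split; last by apply/existsP; exists t; rewrite /holds f_t eqxx.
by apply: contraTneq t_u => ->; apply/negP => /board_x; rewrite f_t.
Qed.

Lemma double_shared_hand t q : 13 <= #|HA| + #|HB| -> owner f t = Some q ->
  shared f K (tlo t) -> shared f K (thi t) -> tlo t = thi t.
Proof.
move=> big f_t sh_lo sh_hi; case: (eqVneq (tlo t) (thi t)) => // lo_hi.
by have := shared_pair_board big sh_lo sh_hi lo_hi (has_num_lo t) (has_num_hi t); rewrite f_t.
Qed.

Lemma num_colour_eq0 v : (num_colour v == 0) = (v == x).
Proof. by rewrite /num_colour; case: (v == x) => //; case: shared => //; case: holds_num. Qed.

Lemma num_colour_eq3 v : (num_colour v == 3) = shared f K v.
Proof.
rewrite /num_colour; case: (v =P x) => [->|_]; last by case: shared => //; case: holds_num.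
by apply/esym/negP => /shared_neq_x; rewrite eqxx.
Qed.

Lemma num_colour_lt4 v : num_colour v < 4.
Proof. by rewrite /num_colour; case: (v == x) => //; case: shared => //; case: holds_num. Qed.

Lemma first_hand_tile t : 13 <= #|HA| + #|HB| -> t \in HA -> hand_tile num_colour 1 t.
Proof.
move=> big; rewrite inE => /eqP f_t.
have colour_v v : has_num t v -> (num_colour v == 1) || (num_colour v == 3).
  case/(hand_num f_t)/andP => /negbTE v_x first_v.
  by rewrite /num_colour v_x sharedE first_v /=; case: holds_num.
rewrite /hand_tile !colour_v ?has_num_lo ?has_num_hi //= !num_colour_eq3.
by apply/implyP => /andP[lo3 hi3]; rewrite (double_shared_hand big f_t).
Qed.

Lemma second_hand_tile t : 13 <= #|HA| + #|HB| -> t \in HB -> hand_tile num_colour 2 t.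
Proof.
move=> big; rewrite inE => /eqP f_t.
have colour_v v : has_num t v -> (num_colour v == 2) || (num_colour v == 3).
  case/(hand_num f_t)/andP => /negbTE v_x second_v.
  by rewrite /num_colour v_x second_v; case: shared.
rewrite /hand_tile !colour_v ?has_num_lo ?has_num_hi //= !num_colour_eq3.
by apply/implyP => /andP[lo3 hi3]; rewrite (double_shared_hand big f_t).
Qed.

Lemma team_pips_tranca : team_pips f K <= 107.
Proof.
rewrite team_pipsE team_handE; have [small | big] := leqP (#|HA| + #|HB|) 12.
  by rewrite -card_team_hand team_handE in small; apply: leq_trans (small_hand_pips small) _.
apply: (two_hands_pips num_colour_lt4 num_colour_eq0 (first_hand_tile^~ big)
                       (second_hand_tile^~ big)).
- exact: disjoint_hands.
- exact: card_hand_run deal_d run_f.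
- exact: card_hand_run deal_d run_f.
have := leq_add (card_hand_run (first_member K) deal_d run_f)
                (card_hand_run (second_member K) deal_d run_f).
rewrite leq_eqVlt => /orP[/eqP full | ]; last by rewrite ltnS => /leq_trans; apply; exact: leq_addr.
suff -> : [forall v, num_colour v != 3] by rewrite full.
by apply/forallP => v; rewrite num_colour_eq3 no_shared_full.
Qed.

End Tranca.

Lemma tranca_team_pips d ms f K :
  is_deal d -> run (init d) ms f -> ends_in_tranca f -> team_pips f K <= 107.
Proof.
move=> deal_d run_f tranca_f.
have [x board_x board_u] := tranca_shape (run_even_halves run_f (even_halves_init d)) tranca_f.
exact: team_pips_tranca deal_d run_f tranca_f.1 board_x board_u.
Qed.

(** * A tranca worth 107 points *)

(* A computable copy of [state], as [inord] and finite functions do not reduce under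
   [vm_compute]: tile [a,b] with [a <= b] is held by player [cowner a b] if this is below
   4, and lies on the board otherwise. *)
Record cstate := CState { cowner : nat -> nat -> nat; cends : option (nat * nat); cturn : nat }.

Definition decode_owner (k : nat) : option 'I_4 := if k < 4 then Some (inord k) else None.

Definition state_of (c : cstate) : state :=
  St [ffun t => decode_owner (cowner c (tlo t) (thi t))]
     (omap (fun p => (inord p.1, inord p.2)) (cends c)) (inord (cturn c)).

Definition cwell_formed (c : cstate) : bool :=
  (cturn c < 4) && (if cends c is Some (l, r) then (l < 7) && (r < 7) else true).

Definition cplaceable (c : cstate) (p : nat * nat) : bool :=
  if cends c is Some (l, r) then [|| p.1 == l, p.2 == l, p.1 == r | p.2 == r] else true.

Definition ccan_play (c : cstate) (q : nat) : bool :=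
  has (fun p => (cowner c p.1 p.2 == q) && cplaceable c p) tile_pairs.

Definition csomeone_out (c : cstate) : bool :=
  has (fun q => all (fun p => cowner c p.1 p.2 != q) tile_pairs) (iota 0 4).

Definition cblocked (c : cstate) : bool := all (fun q => ~~ ccan_play c q) (iota 0 4).

Inductive cmove := CPass | CPlay of nat & nat & bool.

Definition cother (p : nat * nat) (v : nat) : nat := if p.1 == v then p.2 else p.1.

Definition cstep (c : cstate) (m : cmove) : option cstate :=
  let q := cturn c in
  let q' := q.+1 %% 4 in
  match m with
  | CPass => if ccan_play c q then None else Some (CState (cowner c) (cends c) q')
  | CPlay a b side =>
    if [&& a <= b, b < 7 & cowner c a b == q] then
      let owner' x y := if (x == a) && (y == b) then 4 else cowner c x y in
      match cends c with
      | None => Some (CState owner' (Some (a, b)) q')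
      | Some (l, r) =>
        if side then
          if (a == l) || (b == l) then Some (CState owner' (Some (cother (a, b) l, r)) q') else None
        else
          if (a == r) || (b == r) then Some (CState owner' (Some (l, cother (a, b) r)) q')
          else None
      end
    else None
  end.

Fixpoint cplay (c : cstate) (ms : seq cmove) : option cstate :=
  if ms is m :: ms' then
    if cwell_formed c && ~~ (csomeone_out c || cblocked c) then
      if cstep c m is Some c' then cplay c' ms' else None
    else None
  else Some c.

Definition tile_of_pair (a b : nat) : tile :=
  odflt (exist _ (ord0, ord0) (leqnn 0)) (insub ((inord a, inord b) : 'I_7 * 'I_7)).

Lemma tile_pair_of a b : a <= b -> b < 7 -> tile_pair (tile_of_pair a b) = (a, b).
Proof.
move=> ab b7; rewrite /tile_of_pair insubT /= ?inordK //; first lia.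
by rewrite /tile_pair /tlo /thi /= !inordK //; lia.
Qed.

Definition move_of (m : cmove) : move :=
  if m is CPlay a b side then Play (tile_of_pair a b) side else Pass.

Lemma decode_owner_eq k (q : 'I_4) : (decode_owner k == Some q) = (k == q).
Proof.
rewrite /decode_owner; case: ltnP => [k4 | /leq_gtF k4].
  by apply/eqP/eqP => [[<-] | ->]; rewrite ?inordK ?inord_val.
by apply/esym/eqP => kq; rewrite kq ltn_ord in k4.
Qed.

Lemma holds_state_of c q t :
  holds (state_of c) q t = (cowner c (tile_pair t).1 (tile_pair t).2 == q).
Proof. by rewrite /holds ffunE decode_owner_eq. Qed.

Lemma placeable_state_of c t :
  cwell_formed c -> placeable (state_of c) t = cplaceable c (tile_pair t).
Proof.
rewrite /cwell_formed /placeable /cplaceable /=; case: (cends c) => [[l r]|] //= /and3P[_ l7 r7].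
by rewrite /has_num -!val_eqE /= !inordK // -orbA.
Qed.

Lemma can_play_state_of c (q : 'I_4) : cwell_formed c -> can_play (state_of c) q = ccan_play c q.
Proof.
move=> wf_c; apply/existsP/hasP => [[t /andP[c_t t_pl]] | [p /tile_pairP[t <-] /andP[c_t t_pl]]].
  by exists (tile_pair t); rewrite ?tile_pair_mem // -holds_state_of c_t -placeable_state_of.
by exists t; rewrite holds_state_of c_t placeable_state_of.
Qed.

Lemma someone_out_state_of c : someone_out (state_of c) -> csomeone_out c.
Proof.
move=> [q q_out]; apply/hasP; exists (nat_of_ord q); first by rewrite mem_iota ltn_ord.
by apply/allP => _ /tile_pairP[t <-]; rewrite -holds_state_of.
Qed.

Lemma cblockedP c : cwell_formed c -> reflect (blocked (state_of c)) (cblocked c).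
Proof.
move=> wf_c; apply: (iffP allP) => [cblocked_c q | blocked_c q].
  by rewrite can_play_state_of // cblocked_c // mem_iota ltn_ord.
by rewrite mem_iota => /andP[_ q4]; move: (blocked_c (Ordinal q4)); rewrite can_play_state_of.
Qed.

Lemma next_inord k : k < 4 -> Defs.next (inord k) = inord (k.+1 %% 4).
Proof. by move=> k4; rewrite /Defs.next inordK. Qed.

Lemma remove_tile_state_of c t a b : tile_pair t = (a, b) ->
  remove_tile (state_of c) t =
  [ffun u => decode_owner (if (tlo u == a :> nat) && (thi u == b :> nat) then 4
                           else cowner c (tlo u) (thi u))].
Proof.
move=> t_ab; apply/ffunP => u; rewrite !ffunE.
have -> : (u == t) = (tlo u == a :> nat) && (thi u == b :> nat).
  by rewrite -(inj_eq tile_pair_inj) t_ab.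
by case: ifP.
Qed.

Lemma tile_pair_inord t a b : tile_pair t = (a, b) -> tlo t = inord a /\ thi t = inord b.
Proof. by case=> <- <-; rewrite !inord_val. Qed.

Lemma has_num_inord t a b v :
  tile_pair t = (a, b) -> v < 7 -> has_num t (inord v) = (a == v) || (b == v).
Proof. by case=> <- <- v7; rewrite /has_num -!val_eqE /= inordK. Qed.

Lemma other_inord t a b v :
  tile_pair t = (a, b) -> v < 7 -> other t (inord v) = inord (cother (a, b) v).
Proof.
case=> <- <- v7; rewrite /other /cother -val_eqE /= inordK //.
by case: ifP; rewrite inord_val.
Qed.

Lemma cstep_step c m c' :
  cwell_formed c -> cstep c m = Some c' -> step (state_of c) (move_of m) (state_of c').
Proof.
move=> wf_c; have /andP[q4 wf_ends] := wf_c; case: m => [|a b side] /=.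
  case: ifP => // can_c [<-].
  have -> : state_of (CState (cowner c) (cends c) ((cturn c).+1 %% 4)) =
            St (owner (state_of c)) (ends (state_of c)) (Defs.next (turn (state_of c))).
    by rewrite /state_of /= next_inord.
  by apply: step_pass; rewrite can_play_state_of //= inordK ?can_c.
case: ifP => // /and3P[ab b7 c_ab].
have t_ab := tile_pair_of ab b7; set t := tile_of_pair a b in t_ab *.
have [t_lo t_hi] := tile_pair_inord t_ab.
have t_held : holds (state_of c) (turn (state_of c)) t by rewrite holds_state_of t_ab /= inordK.
have owner' : [ffun u => decode_owner (if (tlo u == a :> nat) && (thi u == b :> nat) then 4
                                       else cowner c (tlo u) (thi u))] = remove_tile (state_of c) t.
  by rewrite (remove_tile_state_of c t_ab).
have turn' : inord ((cturn c).+1 %% 4) = Defs.next (turn (state_of c)) by rewrite next_inord.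
case c_ends: (cends c) wf_ends => [[l r]|] wf_ends; last first.
  move=> [<-]; rewrite /state_of /= owner' turn' -t_lo -t_hi.
  by apply: step_start; rewrite /state_of /= ?c_ends.
case/andP: wf_ends => l7 r7; case: side.
  case: ifP => // t_l [<-]; rewrite /state_of /= owner' turn' -(other_inord t_ab l7).
  by apply: step_left; rewrite /state_of /= ?c_ends // (has_num_inord t_ab l7).
case: ifP => // t_r [<-]; rewrite /state_of /= owner' turn' -(other_inord t_ab r7).
by apply: step_right; rewrite /state_of /= ?c_ends // (has_num_inord t_ab r7).
Qed.

Lemma cplay_run c ms c' : cplay c ms = Some c' -> run (state_of c) (map move_of ms) (state_of c').
Proof.
elim: ms c => [|m ms IH] c /=; first by move=> [->]; exact: run_nil.
case: ifP => // /andP[wf_c not_over]; case c_m: (cstep c m) => [c1|] // /IH.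
apply: run_cons (cstep_step wf_c c_m).
case=> [/someone_out_state_of out_c | /(cblockedP wf_c) blocked_c];
  by rewrite ?out_c ?blocked_c ?orbT in not_over.
Qed.

Definition cteam_pips (c : cstate) (k : bool) : nat :=
  sumn [seq (if cowner c p.1 p.2 < 4 then (if odd (cowner c p.1 p.2) == k then p.1 + p.2 else 0)
             else 0) | p <- tile_pairs].

Lemma team_pips_state_of c k : team_pips (state_of c) k = cteam_pips c k.
Proof.
rewrite /cteam_pips -sum_tiles /team_pips big_mkcond /=; apply: eq_bigr => t _.
by rewrite ffunE /decode_owner; case: ltnP => //= k4; rewrite /team inordK.
Qed.

(* The hands of players 1 to 4.  Players 1 and 3 lay all seven 0-tiles while player 2
   always passes and player 4 only plays 5-6; both ends then show 0, and players 2 and 4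
   keep 13 tiles worth 107 pips. *)
Definition deal_hands : seq (seq (nat * nat)) :=
  [:: [:: (0, 0); (1, 3); (0, 2); (0, 4); (0, 6); (1, 1); (1, 2)];
      [:: (4, 6); (4, 5); (3, 6); (4, 4); (3, 5); (3, 4); (3, 3)];
      [:: (0, 3); (0, 1); (2, 4); (0, 5); (1, 4); (2, 2); (2, 3)];
      [:: (1, 5); (1, 6); (2, 5); (2, 6); (5, 5); (5, 6); (6, 6)]].

Definition deal_owner (a b : nat) : nat := find (fun h => (a, b) \in h) deal_hands.

Definition deal107 : {ffun tile -> 'I_4} := [ffun t => inord (deal_owner (tlo t) (thi t))].

Definition game107 : seq cmove :=
  [:: CPlay 0 0 true; CPass; CPlay 0 3 true; CPass; CPlay 1 3 true; CPass; CPlay 0 1 true; CPass;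
      CPlay 0 2 true; CPass; CPlay 2 4 true; CPass; CPlay 0 4 true; CPass; CPlay 0 5 true;
      CPlay 5 6 true; CPlay 0 6 true].

Definition start107 : cstate := CState deal_owner None 0.

Definition end107 : cstate := odflt start107 (cplay start107 game107).

Lemma deal_owner_lt4 t : deal_owner (tlo t) (thi t) < 4.
Proof.
have dealt : all (fun p => deal_owner p.1 p.2 < 4) tile_pairs by vm_compute.
exact: (allP dealt _ (tile_pair_mem t)).
Qed.

Lemma init_deal107 : init deal107 = state_of start107.
Proof.
rewrite /init /state_of /=; congr St; last by apply: val_inj; rewrite /= inordK.
by apply/ffunP => t; rewrite !ffunE /decode_owner deal_owner_lt4.
Qed.

Lemma deal107_deal : is_deal deal107.
Proof.
move=> q; rewrite -sum1dep_card big_mkcond /=.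
rewrite (eq_bigr (fun t => (deal_owner (tile_pair t).1 (tile_pair t).2 == q) : nat)); last first.
  by move=> t _; rewrite ffunE -val_eqE /= inordK ?deal_owner_lt4 //; case: eqP.
by rewrite (sum_tiles (fun p => (deal_owner p.1 p.2 == q) : nat)); case: q => [[|[|[|[|?]]]] ?].
Qed.

Lemma end107_reached : cplay start107 game107 = Some end107.
Proof. by vm_compute. Qed.

Lemma end107_tranca : ends_in_tranca (state_of end107).
Proof.
have wf_end : cwell_formed end107 by vm_compute.
split; first by apply: (elimT (cblockedP wf_end)); vm_compute.
by move/someone_out_state_of; vm_compute.
Qed.

Lemma end107_points : winner_points (state_of end107) = Some 107.
Proof. by rewrite /winner_points !team_pips_state_of; vm_compute. Qed.

Lemma tranca_107_attained : exists (d : {ffun tile -> 'I_4}) (ms : seq move) (s : state),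
  is_deal d /\ run (init d) ms s /\ ends_in_tranca s /\ winner_points s = Some 107.
Proof.
exists deal107, (map move_of game107), (state_of end107).
split; first exact: deal107_deal.
rewrite init_deal107; split; first exact: cplay_run end107_reached.
by split; [exact: end107_tranca | exact: end107_points].
Qed.

Theorem mainTheorem1 :
  (exists (d : {ffun tile -> 'I_4}) (ms : seq move) (s : state),
      is_deal d /\ run (init d) ms s /\ ends_in_tranca s /\ winner_points s = Some 107)
  /\
  (forall (d : {ffun tile -> 'I_4}) (ms : seq move) (s : state) (pts : nat),
      is_deal d -> run (init d) ms s -> ends_in_tranca s ->
      winner_points s = Some pts -> pts <= 107).
Proof.
split; first exact: tranca_107_attained.
move=> d ms s pts deal_d run_s tranca_s; rewrite /winner_points.
have bound k := tranca_team_pips k deal_d run_s tranca_s.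
by case: ltnP => _; [case=> <- | case: ltnP => // _ [<-]].
Qed.
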